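(* $2^5\rightarrow 167\rightrightarrows 19$: there is an injective isotone map $\varphi:\mathbf 2^5\to F_4^-$ such that $\{\varphi(x)[p_1:=e]: x\in\mathbf 2^5,\ e\in\{0,1\}\}\supseteq F_3^-$.
   Context: $F_k$ is the set of monotone Boolean functions of $k$ variables $p_1,\dots,p_k$ (including constants $0,1$), ordered pointwise; $F_k^-=F_k\setminus\{0\}$. For $g\in F_k$ and $e\in\{0,1\}$, $g[p_1:=e]$ is the function of $p_2,\dots,p_k$ obtained by substituting $e$ for $p_1$. $\mathbf 2^i$ is $\{0,1\}^i$ with the coordinatewise order; isotone means order-preserving. Notation: $2^i\rightarrow|F_j^-|\rightrightarrows|F_{j-1}^-|$ means there is an injective isotone $\varphi:\mathbf 2^i\to F_j^-$ such that every element of $F_{j-1}^-$ equals $\varphi(x)[p_1:=e]$ for some $x$, $e$. Here $|F_3^-|=19$, $|F_4^-|=167$. *)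

From mathcomp Require Import all_boot.
Set Implicit Arguments. Unset Strict Implicit. Unset Printing Implicit Defensive.

(* An assignment to the variables p_1,...,p_k: variable p_(i+1) is index i : 'I_k. *)
Definition assign (k : nat) := {ffun 'I_k -> bool}.

Definition boolfun (k : nat) := {ffun assign k -> bool}.

Definition le_assign (k : nat) (x y : assign k) : bool :=
  [forall i, x i ==> y i].

Definition le_fun (k : nat) (f g : boolfun k) : bool :=
  [forall x, f x ==> g x].

Definition monotone_bf (k : nat) (f : boolfun k) : bool :=
  [forall x, forall y, le_assign x y ==> (f x ==> f y)].

Definition zero_bf (k : nat) : boolfun k := [ffun _ => false].

Definition in_Fminus (k : nat) (f : boolfun k) : bool :=
  monotone_bf f && (f != zero_bf k).

(* g[p_1 := e]: substitute e for the first variable p_1 (index ord0);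
   the remaining variables p_2..p_(k+1) become p_1..p_k of the result. *)
Definition subst1 (k : nat) (g : boolfun k.+1) (e : bool) : boolfun k :=
  [ffun y : assign k =>
     g [ffun i : 'I_k.+1 => if unlift ord0 i is Some j then y j else e]].

From mathcomp Require Import all_boot zify.

(* A Boolean function of p_1, ..., p_(k+1) is the Shannon expansion
   [if p_1 then g else f] of its cofactors f = phi[p_1 := 0] and g = phi[p_1 := 1];
   it is monotone when f and g are and f <= g, and it depends isotonically and
   injectively on the pair (f, g).  So it suffices to map 2^5 injectively and
   isotonically into the pairs f <= g of monotone functions of three variables
   with g <> 0, in such a way that every nonzero monotone function of three
   variables occurs as a cofactor.  An explicit table of 32 such pairs does this;
   after encoding assignments and truth tables by natural numbers, its properties
   are checked by computation. *)

Set Implicit Arguments.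
Unset Strict Implicit.
Unset Printing Implicit Defensive.

Definition bit (n i : nat) : bool := odd (n %/ 2 ^ i).

Definition nat_of_bits (s : seq bool) : nat := foldr (fun (b : bool) n => b + n.*2) 0 s.

Lemma bit0n i : bit 0 i = false.
Proof. by rewrite /bit div0n. Qed.

Lemma bit_bit_double (b : bool) n i :
  bit (b + n.*2) i = if i is i'.+1 then bit n i' else b.
Proof.
case: i => [|i]; first by rewrite /bit expn0 divn1 oddD odd_double addbF oddb.
by rewrite /bit expnS divnMA divn2 half_bit_double.
Qed.

Lemma bit_nat_of_bits s i : bit (nat_of_bits s) i = nth false s i.
Proof.
elim: s i => [|b s IHs] i; first by rewrite bit0n nth_nil.
by rewrite /= bit_bit_double; case: i.
Qed.

Lemma nat_of_bits_lt s : nat_of_bits s < 2 ^ size s.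
Proof. by elim: s => //= b s IHs; rewrite expnS; case: b; lia. Qed.

Lemma bitS n i : bit n i.+1 = bit n./2 i.
Proof. by rewrite -{1}[n]odd_double_half bit_bit_double. Qed.

Lemma mkseq_bitS n m : mkseq (bit n) m.+1 = odd n :: mkseq (bit n./2) m.
Proof.
have iota1 : iota 1 m = map succn (iota 0 m) by rewrite -(iotaDl 1).
rewrite /mkseq /= iota1 -map_comp /bit expn0 divn1.
by congr (_ :: _); apply: eq_map => i; rewrite /= -/(bit _ _) bitS.
Qed.

Lemma nat_of_bitsK m n : n < 2 ^ m -> nat_of_bits (mkseq (bit n) m) = n.
Proof.
elim: m n => [|m IHm] n; first by rewrite expn0; case: n.
rewrite expnS mkseq_bitS /= -{1 3}[n]odd_double_half => ltn.
by rewrite IHm //; lia.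
Qed.

Definition le_bits (m a b : nat) : bool := all (fun i => bit a i ==> bit b i) (iota 0 m).

Section Encoding.
Variable k : nat.

Definition assign_of_nat (n : nat) : assign k := [ffun i : 'I_k => bit n i].

Definition nat_of_assign (x : assign k) : nat := nat_of_bits [seq x i | i <- enum 'I_k].

Lemma nat_of_assignK : cancel nat_of_assign assign_of_nat.
Proof.
move=> x; apply/ffunP => i; rewrite ffunE bit_nat_of_bits (nth_map i).
  by rewrite nth_ord_enum.
by rewrite size_enum_ord.
Qed.

Lemma nat_of_assign_lt (x : assign k) : nat_of_assign x < 2 ^ k.
Proof. by have := nat_of_bits_lt [seq x i | i <- enum 'I_k]; rewrite size_map size_enum_ord. Qed.

Lemma assign_of_natK n : n < 2 ^ k -> nat_of_assign (assign_of_nat n) = n.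
Proof.
move=> ltn; rewrite -[RHS](nat_of_bitsK ltn) /nat_of_assign /mkseq -val_enum_ord -map_comp.
by congr nat_of_bits; apply: eq_map => i; rewrite /= ffunE.
Qed.

Lemma forall_assignE (P : pred (assign k)) :
  [forall x, P x] = all (fun n => P (assign_of_nat n)) (iota 0 (2 ^ k)).
Proof.
apply/forallP/allP => [Pall n | Pall x]; first by [].
by rewrite -(nat_of_assignK x); apply: Pall; rewrite mem_iota add0n nat_of_assign_lt.
Qed.

Lemma le_assign_of_nat a b : le_assign (assign_of_nat a) (assign_of_nat b) = le_bits k a b.
Proof.
apply/forallP/allP => [le i | le i].
  by rewrite mem_iota => /= ltik; have := le (Ordinal ltik); rewrite !ffunE.
by rewrite !ffunE; apply: le; rewrite mem_iota ltn_ord.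
Qed.

Definition bf_of_nat (t : nat) : boolfun k := [ffun x => bit t (nat_of_assign x)].

Definition nat_of_bf (f : boolfun k) : nat := nat_of_bits (mkseq (f \o assign_of_nat) (2 ^ k)).

Lemma bf_of_nat_assign t n : n < 2 ^ k -> bf_of_nat t (assign_of_nat n) = bit t n.
Proof. by move=> ltn; rewrite ffunE assign_of_natK. Qed.

Lemma nat_of_bfK : cancel nat_of_bf bf_of_nat.
Proof.
move=> f; apply/ffunP => x.
by rewrite ffunE bit_nat_of_bits nth_mkseq ?nat_of_assign_lt //= nat_of_assignK.
Qed.

Lemma nat_of_bf_lt (f : boolfun k) : nat_of_bf f < 2 ^ 2 ^ k.
Proof. by have := nat_of_bits_lt (mkseq (f \o assign_of_nat) (2 ^ k)); rewrite size_mkseq. Qed.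

Lemma bf_of_natK t : t < 2 ^ 2 ^ k -> nat_of_bf (bf_of_nat t) = t.
Proof.
move=> ltt; rewrite -[RHS](nat_of_bitsK ltt); congr nat_of_bits; rewrite /mkseq.
by apply/eq_in_map => n; rewrite mem_iota /= => ltn; rewrite bf_of_nat_assign.
Qed.

Lemma bf_of_nat0 : bf_of_nat 0 = zero_bf k.
Proof. by apply/ffunP => x; rewrite !ffunE bit0n. Qed.

Lemma bf_of_nat_eq0 t : t < 2 ^ 2 ^ k -> (bf_of_nat t == zero_bf k) = (t == 0).
Proof.
move=> ltt; apply/eqP/eqP => [t0 | ->]; last exact: bf_of_nat0.
by rewrite -(bf_of_natK ltt) t0 -bf_of_nat0 bf_of_natK ?expn_gt0.
Qed.

Definition monotone_bits (t : nat) : bool :=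
  all (fun a => all (fun b => le_bits k a b ==> bit t a ==> bit t b)
    (iota 0 (2 ^ k))) (iota 0 (2 ^ k)).

Lemma monotone_bf_of_nat t : monotone_bf (bf_of_nat t) = monotone_bits t.
Proof.
rewrite /monotone_bf forall_assignE; apply: eq_in_all => a; rewrite mem_iota => lta.
rewrite forall_assignE; apply: eq_in_all => b; rewrite mem_iota => ltb.
by rewrite le_assign_of_nat !bf_of_nat_assign.
Qed.

Lemma le_fun_bf_of_nat s t : le_fun (bf_of_nat s) (bf_of_nat t) = le_bits (2 ^ k) s t.
Proof.
rewrite /le_fun forall_assignE; apply: eq_in_all => n; rewrite mem_iota => ltn.
by rewrite !bf_of_nat_assign.
Qed.

End Encoding.

Section Shannon.
Variable k : nat.

Definition assign_tail (x : assign k.+1) : assign k := [ffun i : 'I_k => x (lift ord0 i)].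

Definition shannon (f g : boolfun k) : boolfun k.+1 :=
  [ffun x : assign k.+1 => if x ord0 then g (assign_tail x) else f (assign_tail x)].

Lemma subst1_shannon f g e : subst1 (shannon f g) e = if e then g else f.
Proof.
apply/ffunP => y; rewrite !ffunE unlift_none.
have -> : assign_tail [ffun i => if unlift ord0 i is Some j then y j else e] = y.
  by apply/ffunP => j; rewrite !ffunE liftK.
by case: e.
Qed.

Lemma le_assign_tail (x y : assign k.+1) :
  le_assign x y -> le_assign (assign_tail x) (assign_tail y).
Proof. by move=> /forallP le; apply/forallP => i; rewrite !ffunE. Qed.

Lemma le_fun_shannon f f' g g' :
  le_fun f f' -> le_fun g g' -> le_fun (shannon f g) (shannon f' g').
Proof.
move=> /forallP ff' /forallP gg'; apply/forallP => x; rewrite !ffunE.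
by case: (x ord0).
Qed.

Lemma monotone_shannon f g :
  monotone_bf f -> monotone_bf g -> le_fun f g -> monotone_bf (shannon f g).
Proof.
move=> /forallP mf /forallP mg /forallP fg; apply/forallP => x; apply/forallP => y.
apply/implyP => xy; rewrite !ffunE.
have /implyP tf := forallP (mf (assign_tail x)) (assign_tail y).
have /implyP tg := forallP (mg (assign_tail x)) (assign_tail y).
move: (tf (le_assign_tail xy)) (tg (le_assign_tail xy)) (forallP xy ord0).
case: (x ord0); case: (y ord0) => //= fxy _ _; apply/implyP => /(implyP fxy).
exact/implyP/fg.
Qed.

Lemma shannon_neq0 f g : g != zero_bf k -> shannon f g != zero_bf k.+1.
Proof.
apply: contra => /eqP sh0; rewrite -(subst1_shannon f g true) sh0.
by apply/eqP/ffunP => y; rewrite !ffunE.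
Qed.

End Shannon.

Definition cofactor_bits_ok (k : nat) (p : nat * nat) : bool :=
  [&& p.1 < 2 ^ 2 ^ k, p.2 < 2 ^ 2 ^ k, monotone_bits k p.1, monotone_bits k p.2,
      le_bits (2 ^ k) p.1 p.2 & p.2 != 0].

Definition le_bits_pair (m : nat) (p q : nat * nat) : bool :=
  le_bits m p.1 q.1 && le_bits m p.2 q.2.

Section CofactorTable.
Variables k n : nat.
Variable s : seq (nat * nat).
Hypothesis size_s : size s = 2 ^ n.
Hypothesis uniq_s : uniq s.
Hypothesis s_ok : all (cofactor_bits_ok k) s.
Hypothesis s_isotone : all (fun a => all (fun b =>
  le_bits n a b ==> le_bits_pair (2 ^ k) (nth (0, 0) s a) (nth (0, 0) s b))
    (iota 0 (2 ^ n))) (iota 0 (2 ^ n)).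
Hypothesis s_covers : all (fun t =>
  monotone_bits k t && (t != 0) ==> has (fun p => (p.1 == t) || (p.2 == t)) s)
    (iota 0 (2 ^ 2 ^ k)).

Definition cofactors (x : assign n) : nat * nat := nth (0, 0) s (nat_of_assign x).

Definition table_embedding (x : assign n) : boolfun k.+1 :=
  shannon (bf_of_nat k (cofactors x).1) (bf_of_nat k (cofactors x).2).

Lemma cofactors_in x : cofactors x \in s.
Proof. by rewrite mem_nth // size_s nat_of_assign_lt. Qed.

Lemma cofactors_ok x : cofactor_bits_ok k (cofactors x).
Proof. exact: (allP s_ok _ (cofactors_in x)). Qed.

Lemma subst1_table_embedding x e :
  subst1 (table_embedding x) e = bf_of_nat k (if e then (cofactors x).2 else (cofactors x).1).
Proof. by rewrite subst1_shannon; case: e. Qed.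

Lemma table_embedding_inj : injective table_embedding.
Proof.
move=> x y exy.
have [/and3P [ltx1 ltx2 _] /and3P [lty1 lty2 _]] := (cofactors_ok x, cofactors_ok y).
have cofactor_eq (e : bool) := congr1 (@nat_of_bf k) (congr1 (fun f => subst1 f e) exy).
move: (cofactor_eq false) (cofactor_eq true).
rewrite !subst1_table_embedding !bf_of_natK // => e1 e2.
apply: (can_inj (@nat_of_assignK n)); apply/eqP.
rewrite -(nth_uniq (0, 0) _ _ uniq_s) ?size_s ?nat_of_assign_lt //.
by rewrite -/(cofactors x) -/(cofactors y) [cofactors x]surjective_pairing e1 e2 -surjective_pairing.
Qed.

Lemma table_embedding_isotone x y :
  le_assign x y -> le_fun (table_embedding x) (table_embedding y).
Proof.
rewrite -(nat_of_assignK x) -(nat_of_assignK y) le_assign_of_nat => xy.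
have mem_codes (z : assign n) : nat_of_assign z \in iota 0 (2 ^ n).
  by rewrite mem_iota add0n nat_of_assign_lt.
have /andP [le1 le2] := implyP (allP (allP s_isotone _ (mem_codes x)) _ (mem_codes y)) xy.
by apply: le_fun_shannon; rewrite le_fun_bf_of_nat !nat_of_assignK.
Qed.

Lemma table_embedding_Fminus x : in_Fminus (table_embedding x).
Proof.
have /and5P [lt1 lt2 m1 m2 /andP [le12 nz2]] := cofactors_ok x.
apply/andP; split; last by apply: shannon_neq0; rewrite bf_of_nat_eq0.
by apply: monotone_shannon; rewrite ?monotone_bf_of_nat ?le_fun_bf_of_nat.
Qed.

Lemma table_embedding_covers g :
  in_Fminus g -> exists (x : assign n) (e : bool), subst1 (table_embedding x) e = g.
Proof.
move=> /andP [mg g0]; set t := nat_of_bf g.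
have t_ok : monotone_bits k t && (t != 0).
  rewrite -monotone_bf_of_nat nat_of_bfK mg /=.
  by apply: contra g0 => /eqP t0; rewrite -(nat_of_bfK g) -/t t0 bf_of_nat0.
have t_range : t \in iota 0 (2 ^ 2 ^ k) by rewrite mem_iota add0n nat_of_bf_lt.
have /hasP [p ps pt] := implyP (allP s_covers t t_range) t_ok.
pose x := assign_of_nat n (index p s).
have cx : cofactors x = p.
  by rewrite /cofactors assign_of_natK ?nth_index // -size_s index_mem.
exists x, (p.2 == t); rewrite subst1_table_embedding cx -(nat_of_bfK g) -/t.
by move: pt; have [-> | _] := eqVneq p.2 t; rewrite ?eqxx ?orbF // => /eqP ->.
Qed.

Lemma cofactor_table_embedding :
  exists phi : assign n -> boolfun k.+1,
    injective phi /\
    (forall x y : assign n, le_assign x y -> le_fun (phi x) (phi y)) /\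
    (forall x : assign n, in_Fminus (phi x)) /\
    (forall g : boolfun k, in_Fminus g ->
       exists (x : assign n) (e : bool), subst1 (phi x) e = g).
Proof.
exists table_embedding; split; first exact: table_embedding_inj.
split; first exact: table_embedding_isotone.
split; [exact: table_embedding_Fminus | exact: table_embedding_covers].
Qed.

End CofactorTable.

(* Entry number [nat_of_assign x] holds the truth tables of phi(x)[p_1 := 0] and
   phi(x)[p_1 := 1]; bit number [nat_of_assign y] of a truth table is its value at y. *)
Definition cofactor_table : seq (nat * nat) := [::
  (0, 128); (128, 136); (128, 200); (136, 204); (128, 168); (168, 234); (128, 238); (232, 254);
  (128, 232); (136, 234); (224, 232); (234, 238); (160, 234); (234, 250); (240, 254); (250, 255);
  (0, 160); (160, 254); (192, 232); (248, 254); (224, 248); (234, 255); (248, 255); (254, 255);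
  (160, 248); (170, 254); (240, 250); (254, 254); (236, 254); (238, 255); (252, 255); (255, 255)].

Theorem mainTheorem11 :
  exists phi : assign 5 -> boolfun 4,
    injective phi /\
    (forall x y : assign 5, le_assign x y -> le_fun (phi x) (phi y)) /\
    (forall x : assign 5, in_Fminus (phi x)) /\
    (forall g : boolfun 3, in_Fminus g ->
       exists (x : assign 5) (e : bool), subst1 (phi x) e = g).
Proof. by apply: (cofactor_table_embedding (k := 3) (n := 5) (s := cofactor_table)); vm_compute. Qed.
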